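(* For $N\ge1$ let $U=-e^{2\pi i/N}\begin{pmatrix}1/2&-\sqrt{3}/2\\ \sqrt3/2&1/2\end{pmatrix}$, $|\psi_i\rangle=(U^i|0\rangle)^{\otimes N}$ ($i=0,1,2$), each with prior $1/3$, shared among $N$ parties each holding one qubit. Let $P^{opt}_N$ be the optimal minimum-error success probability and $P^{LOCC}_N$ the supremum of success probabilities achievable by $N$-party LOCC measurements. Then $\lim_{N\to\infty}P^{LOCC}_N=\lim_{N\to\infty}P^{opt}_N=1$; in particular $P^{opt}_N-P^{LOCC}_N\to0$.
   Context: The success probability of a three-outcome POVM $\{\Pi_i\}$ is $\tfrac13\sum_i\langle\psi_i|\Pi_i|\psi_i\rangle$. $N$-party LOCC means measurements implementable by local operations on each party's qubit together with classical communication among the parties. *)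

From Stdlib Require Import Reals Lra Lia List Arith.
Open Scope R_scope.

Definition C := (R * R)%type.
Definition Re (z : C) : R := fst z.
Definition Im (z : C) : R := snd z.
Definition RtoC (x : R) : C := (x, 0).
Definition C0 : C := (0, 0).
Definition C1 : C := (1, 0).
Definition Cadd (z w : C) : C := (fst z + fst w, snd z + snd w).
Definition Cmul (z w : C) : C :=
  (fst z * fst w - snd z * snd w, fst z * snd w + snd z * fst w).
Definition Copp (z : C) : C := (- fst z, - snd z).
Definition Cconj (z : C) : C := (fst z, - snd z).
Definition Cexpi (t : R) : C := (cos t, sin t).

Fixpoint Csum (f : nat -> C) (n : nat) : C :=
  match n with O => C0 | S m => Cadd (Csum f m) (f m) end.
Fixpoint Cprod (f : nat -> C) (n : nat) : C :=
  match n with O => C1 | S m => Cmul (Cprod f m) (f m) end.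

(* ---------- matrices and vectors (entries outside the range are ignored) ---------- *)
Definition Mat := nat -> nat -> C.
Definition Vec := nat -> C.

Definition Mzero : Mat := fun _ _ => C0.
Definition Mid : Mat := fun a b => if Nat.eqb a b then C1 else C0.
Definition Madd (A B : Mat) : Mat := fun a b => Cadd (A a b) (B a b).
Definition Mscale (z : C) (A : Mat) : Mat := fun a b => Cmul z (A a b).
Definition Mapply (d : nat) (A : Mat) (v : Vec) : Vec :=
  fun a => Csum (fun b => Cmul (A a b) (v b)) d.
Definition qform (d : nat) (A : Mat) (v : Vec) : C :=
  Csum (fun a => Csum (fun b => Cmul (Cconj (v a)) (Cmul (A a b) (v b))) d) d.
Definition Meq (d : nat) (A B : Mat) : Prop :=
  forall a b, (a < d)%nat -> (b < d)%nat -> A a b = B a b.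
(* positive semidefinite (hence Hermitian) operator on C^d *)
Definition psd (d : nat) (A : Mat) : Prop :=
  forall v : Vec, Im (qform d A v) = 0 /\ 0 <= Re (qform d A v).

(* ---------- N qubits: basis index a < 2^N, party k holds bit k of a ---------- *)
Definition bit (k a : nat) : nat := if Nat.testbit a k then 1%nat else 0%nat.

Definition kron (N : nat) (E : nat -> Mat) : Mat :=
  fun a b => Cprod (fun k => E k (bit k a) (bit k b)) N.
Definition vpow (N : nat) (phi : Vec) : Vec :=
  fun a => Cprod (fun k => phi (bit k a)) N.

Definition sqrt3 := sqrt 3.
Definition Urot : Mat := fun a b =>
  match a, b with
  | O, O => RtoC (1/2) | O, S _ => RtoC (- sqrt3 / 2)
  | S _, O => RtoC (sqrt3 / 2) | S _, S _ => RtoC (1/2)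
  end.
Definition Umat (N : nat) : Mat :=
  Mscale (Copp (Cexpi (2 * PI / INR N))) Urot.
Definition ket0 : Vec := fun a => if Nat.eqb a 0 then C1 else C0.
Fixpoint Upow_ket0 (N i : nat) : Vec :=
  match i with O => ket0 | S j => Mapply 2 (Umat N) (Upow_ket0 N j) end.
Definition psi (N i : nat) : Vec := vpow N (Upow_ket0 N i).

Definition povm3 (N : nat) (P : nat -> Mat) : Prop :=
  (forall i, (i < 3)%nat -> psd (2 ^ N) (P i)) /\
  Meq (2 ^ N) (Madd (P 0%nat) (Madd (P 1%nat) (P 2%nat))) Mid.

Definition success (N : nat) (P : nat -> Mat) : R :=
  / 3 * (Re (qform (2 ^ N) (P 0%nat) (psi N 0))
       + Re (qform (2 ^ N) (P 1%nat) (psi N 1))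
       + Re (qform (2 ^ N) (P 2%nat) (psi N 2))).

Definition upd (E : nat -> Mat) (j : nat) (F : Mat) : nat -> Mat :=
  fun k => if Nat.eqb k j then F else E k.
Definition Msum2 (l : list (Mat * (nat -> Mat))) : Mat :=
  fold_right (fun p acc => Madd (fst p) acc) Mzero l.
Definition Psum (l : list (Mat * (nat -> Mat))) : nat -> Mat :=
  fun i => fold_right (fun p acc => Madd (snd p i) acc) Mzero l.

(* LOCC protocol trees (Heisenberg picture).  A node carries the product
   operator E_0 (x) ... (x) E_{N-1} accumulated along its branch (E k is party
   k's local effect on its own qubit).  At a node either the protocol stops
   and announces an outcome i < 3, or some party j performs a local
   measurement, i.e. splits its local effect E j into finitely many positive
   summands F_m (sum F_m = E j), broadcasts m, and the protocol continues in
   branch m.  [locc_tree N E P] says the subtree rooted at E realizes the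
   (unnormalized) outcome operators P 0, P 1, P 2. *)
Inductive locc_tree (N : nat) : (nat -> Mat) -> (nat -> Mat) -> Prop :=
  | locc_leaf : forall E i, (i < 3)%nat ->
      locc_tree N E (fun i' => if Nat.eqb i' i then kron N E else Mzero)
  | locc_split : forall E j (l : list (Mat * (nat -> Mat))),
      (j < N)%nat ->
      (forall F Q, In (F, Q) l -> psd 2 F /\ locc_tree N (upd E j F) Q) ->
      Meq 2 (Msum2 l) (E j) ->
      locc_tree N E (Psum l).

Definition locc3 (N : nat) (P : nat -> Mat) : Prop :=
  locc_tree N (fun _ => Mid) P.

Definition opt_values (N : nat) (p : R) : Prop :=
  exists P, povm3 N P /\ p = success N P.
Definition locc_values (N : nat) (p : R) : Prop :=
  exists P, locc3 N P /\ p = success N P.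

(* Upper bound: the three outcome operators of a POVM are positive and add up to
   the identity, so each expectation in a normalized state is at most 1.  LOCC
   protocols are complete in the same sense, and their outcome operators are
   positive on product states because a product operator has a factorized
   expectation there; hence both suprema are at most 1.

   Lower bound: up to a phase, the single-qubit states [U^i |0>] are the trine
   vectors, and the POVM {2/3 |w_m><w_m|} with [w_m] orthogonal to the [m]-th
   trine vector rules out state [m] when it yields outcome [m], while each other
   outcome has probability 1/2.  If every party performs it and the parties
   announce the first state never ruled out, state 0 is always identified,
   state 1 fails only if outcome 0 never occurs (probability 2^-N), and state 2
   fails with probability at most 2^(1-N).  This product measurement is LOCC,
   so both suprema lie in [1 - 2^-N, 1]. *)

From Stdlib Require Import Reals Lra Lia List Arith.
Open Scope R_scope.

Lemma Cpair_eq (a b c d : R) : a = c -> b = d -> (a, b) = (c, d).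
Proof. intros; subst; reflexivity. Qed.

Definition Csub (z w : C) : C := Cadd z (Copp w).

Lemma C_ring_theory : ring_theory C0 C1 Cadd Cmul Csub Copp (@eq C).
Proof.
  constructor; intros; repeat match goal with z : C |- _ => destruct z end;
    unfold Csub, Cadd, Cmul, Copp, C0, C1; simpl; apply Cpair_eq; ring.
Qed.
Add Ring C_ring : C_ring_theory.

Lemma RtoC_add x y : RtoC (x + y) = Cadd (RtoC x) (RtoC y).
Proof. unfold RtoC, Cadd; simpl; apply Cpair_eq; ring. Qed.

Lemma RtoC_mul x y : RtoC (x * y) = Cmul (RtoC x) (RtoC y).
Proof. unfold RtoC, Cmul; simpl; apply Cpair_eq; ring. Qed.

Lemma Cconj_add z w : Cconj (Cadd z w) = Cadd (Cconj z) (Cconj w).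
Proof. destruct z, w; unfold Cconj, Cadd; simpl; apply Cpair_eq; ring. Qed.

Lemma Cconj_mul z w : Cconj (Cmul z w) = Cmul (Cconj z) (Cconj w).
Proof. destruct z, w; unfold Cconj, Cmul; simpl; apply Cpair_eq; ring. Qed.

Lemma Csum_ext f g n : (forall a, (a < n)%nat -> f a = g a) -> Csum f n = Csum g n.
Proof.
  induction n; intros H; simpl; auto.
  rewrite IHn, H by (auto; intros; apply H; lia). reflexivity.
Qed.

Lemma Csum_add f g n :
  Csum (fun a => Cadd (f a) (g a)) n = Cadd (Csum f n) (Csum g n).
Proof. induction n; simpl; [|rewrite IHn]; ring. Qed.

Lemma Csum_mul_l z f n : Csum (fun a => Cmul z (f a)) n = Cmul z (Csum f n).
Proof. induction n; simpl; [|rewrite IHn]; ring. Qed.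

Lemma Csum_mul_r z f n : Csum (fun a => Cmul (f a) z) n = Cmul (Csum f n) z.
Proof. induction n; simpl; [|rewrite IHn]; ring. Qed.

Lemma Csum_C0 n : Csum (fun _ => C0) n = C0.
Proof. induction n; simpl; [|rewrite IHn]; ring. Qed.

Lemma Csum_split f n m :
  Csum f (n + m) = Cadd (Csum f n) (Csum (fun a => f (n + a)%nat) m).
Proof.
  induction m; simpl.
  - rewrite Nat.add_0_r. ring.
  - rewrite Nat.add_succ_r. simpl. rewrite IHm. ring.
Qed.

Lemma Csum_conj f n : Cconj (Csum f n) = Csum (fun a => Cconj (f a)) n.
Proof.
  induction n; simpl.
  - unfold Cconj, C0; simpl; apply Cpair_eq; ring.
  - rewrite Cconj_add, IHn; auto.
Qed.

Lemma Cprod_ext f g n : (forall a, (a < n)%nat -> f a = g a) -> Cprod f n = Cprod g n.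
Proof.
  induction n; intros H; simpl; auto.
  rewrite IHn, H by (auto; intros; apply H; lia). reflexivity.
Qed.

Lemma Cprod_mul f g n :
  Cprod (fun a => Cmul (f a) (g a)) n = Cmul (Cprod f n) (Cprod g n).
Proof. induction n; simpl; [|rewrite IHn]; ring. Qed.

Lemma Cprod_conj f n : Cconj (Cprod f n) = Cprod (fun a => Cconj (f a)) n.
Proof.
  induction n; simpl.
  - unfold Cconj, C1; simpl; apply Cpair_eq; ring.
  - rewrite Cconj_mul, IHn; auto.
Qed.

Lemma Cprod_C1 f n : (forall k, (k < n)%nat -> f k = C1) -> Cprod f n = C1.
Proof. induction n; intros H; simpl; auto. rewrite IHn, H by (auto; lia). ring. Qed.

Lemma Cprod_C0 f n k : (k < n)%nat -> f k = C0 -> Cprod f n = C0.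
Proof.
  induction n; intros Hk Hf; [lia|]. simpl.
  destruct (Nat.eq_dec k n) as [->|]; [rewrite Hf | rewrite IHn by (auto; lia)]; ring.
Qed.

Lemma Cprod_extract f n j : (j < n)%nat ->
  Cprod f n = Cmul (f j) (Cprod (fun k => if Nat.eqb k j then C1 else f k) n).
Proof.
  induction n; intros Hj; [lia|]. simpl.
  destruct (Nat.eq_dec j n) as [->|].
  - rewrite Nat.eqb_refl.
    rewrite (Cprod_ext (fun k => if Nat.eqb k n then _ else f k) f n)
      by (intros a Ha; destruct (Nat.eqb_spec a n); [lia|auto]).
    ring.
  - rewrite IHn by lia. destruct (Nat.eqb_spec n j); [lia|]. ring.
Qed.

Lemma Cprod_upd (g : nat -> Mat -> C) E j F n : (j < n)%nat ->
  Cprod (fun k => g k (upd E j F k)) n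
  = Cmul (g j F) (Cprod (fun k => if Nat.eqb k j then C1 else g k (E k)) n).
Proof.
  intros Hj. rewrite (Cprod_extract _ _ j Hj). unfold upd at 1. rewrite Nat.eqb_refl.
  f_equal. apply Cprod_ext; intros k _. unfold upd. destruct (Nat.eqb k j); auto.
Qed.

Lemma bit_lt_2 k a : (bit k a < 2)%nat.
Proof. unfold bit; destruct (Nat.testbit a k); lia. Qed.

Lemma pow2_pos N : (0 < 2 ^ N)%nat.
Proof. apply Nat.neq_0_lt_0, Nat.pow_nonzero; lia. Qed.

Lemma testbit_lt_pow2 a N k : (a < 2 ^ N)%nat -> (N <= k)%nat -> Nat.testbit a k = false.
Proof.
  intros Ha Hk. apply Nat.testbit_false. rewrite Nat.div_small; [reflexivity|].
  apply Nat.lt_le_trans with (2 ^ N)%nat; auto. apply Nat.pow_le_mono_r; lia.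
Qed.

Lemma testbit_pow2_add_top a N : (a < 2 ^ N)%nat -> Nat.testbit (2 ^ N + a) N = true.
Proof.
  intros Ha. apply Nat.testbit_true.
  replace (2 ^ N + a)%nat with (a + 1 * 2 ^ N)%nat by lia.
  rewrite Nat.div_add by (pose proof (pow2_pos N); lia).
  rewrite Nat.div_small by auto. reflexivity.
Qed.

Lemma testbit_pow2_add_low a N k : (a < 2 ^ N)%nat -> (k < N)%nat ->
  Nat.testbit (2 ^ N + a) k = Nat.testbit a k.
Proof.
  intros Ha Hk. rewrite <- (Nat.mod_pow2_bits_low (2 ^ N + a) N k Hk).
  replace (2 ^ N + a)%nat with (a + 1 * 2 ^ N)%nat by lia.
  rewrite Nat.Div0.mod_add, Nat.mod_small by auto. reflexivity.
Qed.

Lemma Csum_Cprod_bits (f : nat -> nat -> C) N :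
  Csum (fun a => Cprod (fun k => f k (bit k a)) N) (2 ^ N)
  = Cprod (fun k => Cadd (f k 0%nat) (f k 1%nat)) N.
Proof.
  induction N; [simpl; ring|].
  replace (2 ^ S N)%nat with (2 ^ N + 2 ^ N)%nat by (simpl; lia).
  rewrite Csum_split. simpl.
  rewrite (Csum_ext _ (fun a => Cmul (Cprod (fun k => f k (bit k a)) N) (f N 0%nat))).
  2:{ intros a Ha. unfold bit at 2. rewrite (testbit_lt_pow2 a N N); auto. }
  rewrite (Csum_ext (fun a => Cmul (Cprod (fun k => f k (bit k (2 ^ N + a))) N)
                                   (f N (bit N (2 ^ N + a))))
                    (fun a => Cmul (Cprod (fun k => f k (bit k a)) N) (f N 1%nat))).
  2:{ intros a Ha. unfold bit at 2. rewrite testbit_pow2_add_top by auto. f_equal.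
      apply Cprod_ext; intros k Hk. unfold bit. rewrite testbit_pow2_add_low; auto. }
  rewrite !Csum_mul_r, IHN. ring.
Qed.

Lemma qform_kron_vpow N E phi :
  qform (2 ^ N) (kron N E) (vpow N phi) = Cprod (fun k => qform 2 (E k) phi) N.
Proof.
  set (h k x y := Cmul (Cconj (phi x)) (Cmul (E k x y) (phi y))).
  unfold qform, kron, vpow.
  rewrite (Csum_ext _
             (fun a => Cprod (fun k => Cadd (h k (bit k a) 0%nat) (h k (bit k a) 1%nat)) N)).
  - rewrite (Csum_Cprod_bits (fun k x => Cadd (h k x 0%nat) (h k x 1%nat))).
    apply Cprod_ext; intros. simpl. unfold h. ring.
  - intros a Ha.
    rewrite (Csum_ext _ (fun b => Cprod (fun k => h k (bit k a) (bit k b)) N)).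
    + apply (Csum_Cprod_bits (fun k x => h k (bit k a) x)).
    + intros b Hb. unfold h. rewrite Cprod_conj, <- !Cprod_mul. reflexivity.
Qed.

Lemma testbits_agree_or_differ a b N :
  (forall k, (k < N)%nat -> Nat.testbit a k = Nat.testbit b k)
  \/ exists k, (k < N)%nat /\ Nat.testbit a k <> Nat.testbit b k.
Proof.
  induction N as [|N [H|[k [Hk Hne]]]].
  - left; intros; lia.
  - destruct (Bool.bool_dec (Nat.testbit a N) (Nat.testbit b N)).
    + left; intros k Hk. destruct (Nat.eq_dec k N) as [->|]; auto. apply H; lia.
    + right; exists N; split; auto.
  - right; exists k; split; auto.
Qed.

Lemma kron_Mid N : Meq (2 ^ N) (kron N (fun _ => Mid)) Mid.
Proof.
  intros a b Ha Hb. unfold kron.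
  destruct (testbits_agree_or_differ a b N) as [H|[k [Hk Hne]]].
  - assert (a = b) as <-.
    { apply Nat.bits_inj. intros k. destruct (Nat.lt_ge_cases k N).
      - apply H; auto.
      - rewrite !(testbit_lt_pow2 _ N k); auto. }
    unfold Mid at 2. rewrite Nat.eqb_refl.
    apply Cprod_C1; intros. unfold Mid. rewrite Nat.eqb_refl. auto.
  - unfold Mid at 2. destruct (Nat.eqb_spec a b) as [->|]; [contradiction|].
    apply (Cprod_C0 _ _ k Hk). unfold Mid, bit.
    destruct (Nat.testbit a k), (Nat.testbit b k); simpl; auto; congruence.
Qed.

Lemma kron_Meq N E E' :
  (forall k, (k < N)%nat -> Meq 2 (E k) (E' k)) -> forall a b, kron N E a b = kron N E' a b.
Proof.
  intros H a b. unfold kron. apply Cprod_ext; intros k Hk. apply H; auto; apply bit_lt_2.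
Qed.

Lemma kron_upd_Madd N E j F G a b : (j < N)%nat ->
  kron N (upd E j (Madd F G)) a b = Cadd (kron N (upd E j F) a b) (kron N (upd E j G) a b).
Proof.
  intros Hj. unfold kron.
  rewrite !(Cprod_upd (fun k M => M (bit k a) (bit k b))) by auto. unfold Madd. ring.
Qed.

Lemma kron_upd_Mzero N E j a b : (j < N)%nat -> kron N (upd E j Mzero) a b = C0.
Proof.
  intros Hj. unfold kron. rewrite (Cprod_upd (fun k M => M (bit k a) (bit k b))) by auto.
  unfold Mzero. ring.
Qed.

Lemma qform_Madd d A B v : qform d (Madd A B) v = Cadd (qform d A v) (qform d B v).
Proof.
  unfold qform, Madd. rewrite <- Csum_add. apply Csum_ext; intros.
  rewrite <- Csum_add. apply Csum_ext; intros. ring.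
Qed.

Lemma qform_Mzero d v : qform d Mzero v = C0.
Proof.
  unfold qform, Mzero. rewrite (Csum_ext _ (fun _ => C0)); [apply Csum_C0|].
  intros. rewrite (Csum_ext _ (fun _ => C0)); [apply Csum_C0|]. intros. ring.
Qed.

Lemma qform_Meq d A B v : Meq d A B -> qform d A v = qform d B v.
Proof.
  intros H. unfold qform. apply Csum_ext; intros. apply Csum_ext; intros. rewrite H; auto.
Qed.

Definition Cnonneg (z : C) : Prop := Im z = 0 /\ 0 <= Re z.

Lemma Cnonneg_C0 : Cnonneg C0.
Proof. unfold Cnonneg, C0, Re, Im; simpl; lra. Qed.

Lemma Cnonneg_add z w : Cnonneg z -> Cnonneg w -> Cnonneg (Cadd z w).
Proof. destruct z, w; unfold Cnonneg, Cadd, Re, Im; simpl; lra. Qed.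

Lemma Cnonneg_mul z w : Cnonneg z -> Cnonneg w -> Cnonneg (Cmul z w).
Proof.
  destruct z, w; unfold Cnonneg, Cmul, Re, Im; simpl; intros [-> ?] [-> ?].
  split; [ring | nra].
Qed.

Lemma Cnonneg_Cprod f n : (forall k, (k < n)%nat -> Cnonneg (f k)) -> Cnonneg (Cprod f n).
Proof.
  induction n; intros H; simpl.
  - unfold Cnonneg, C1, Re, Im; simpl; lra.
  - apply Cnonneg_mul; [apply IHn; intros |]; apply H; lia.
Qed.

Lemma Cnonneg_sum3_le_1 z0 z1 z2 :
  Cnonneg z0 -> Cnonneg z1 -> Cnonneg z2 -> Cadd z0 (Cadd z1 z2) = C1 ->
  Re z0 <= 1 /\ Re z1 <= 1 /\ Re z2 <= 1.
Proof.
  destruct z0, z1, z2; unfold Cnonneg, Cadd, C1, Re, Im; simpl.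
  intros [_ ?] [_ ?] [_ ?] Hsum. inversion Hsum. lra.
Qed.

Lemma psd_Madd d A B : psd d A -> psd d B -> psd d (Madd A B).
Proof. intros HA HB v. rewrite qform_Madd. apply Cnonneg_add; [apply HA | apply HB]. Qed.

Lemma psd_Mzero d : psd d Mzero.
Proof. intros v. rewrite qform_Mzero. apply Cnonneg_C0. Qed.

Definition real_rank1 (M : Mat) : Prop :=
  exists u : nat -> R, forall a b, M a b = RtoC (u a * u b).

(* [<v|u><u|v> = |<u|v>|^2]. *)
Lemma psd_real_rank1 d M : real_rank1 M -> psd d M.
Proof.
  intros [u Hu] v.
  set (S := Csum (fun b => Cmul (RtoC (u b)) (v b)) d).
  assert (qform d M v = Cmul (Cconj S) S) as ->.
  { unfold qform, S. rewrite Csum_conj, <- Csum_mul_r. apply Csum_ext; intros a Ha.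
    rewrite <- Csum_mul_l. apply Csum_ext; intros b Hb. rewrite Hu.
    destruct (v a), (v b). unfold RtoC, Cconj, Cmul; simpl. apply Cpair_eq; ring. }
  destruct S. unfold Cnonneg, Cconj, Cmul, Re, Im; simpl. split; [ring | nra].
Qed.

Lemma real_rank1_kron N E : (forall k, (k < N)%nat -> real_rank1 (E k)) -> real_rank1 (kron N E).
Proof.
  induction N; intros H.
  - exists (fun _ => 1). intros a b. unfold kron; simpl. unfold C1, RtoC. apply Cpair_eq; ring.
  - destruct IHN as [u Hu]; [intros; apply H; lia|].
    destruct (H N) as [w Hw]; [lia|].
    exists (fun a => u a * w (bit N a)). intros a b. unfold kron in *; simpl.
    rewrite Hu, Hw. unfold RtoC, Cmul; simpl. apply Cpair_eq; ring.
Qed.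

Definition Mtotal (P : nat -> Mat) : Mat := Madd (P 0%nat) (Madd (P 1%nat) (P 2%nat)).

Lemma Mtotal_Psum_kron N E j l : (j < N)%nat ->
  (forall F Q, In (F, Q) l -> Meq (2 ^ N) (Mtotal Q) (kron N (upd E j F))) ->
  Meq (2 ^ N) (Mtotal (Psum l)) (kron N (upd E j (Msum2 l))).
Proof.
  intros Hj. induction l as [|[F Q] l IH]; intros H a b Ha Hb.
  - rewrite kron_upd_Mzero by auto. unfold Mtotal, Psum, Madd, Mzero; simpl. ring.
  - change (Msum2 ((F, Q) :: l)) with (Madd F (Msum2 l)). rewrite kron_upd_Madd by auto.
    rewrite <- (H F Q (or_introl eq_refl)), <- (IH (fun F' Q' Hin => H F' Q' (or_intror Hin)))
      by auto.
    unfold Mtotal, Psum, Madd; simpl. ring.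
Qed.

(* Structural recursion on the tree: the generated induction principle of
   [locc_tree] provides no hypothesis for the subtrees stored in the list. *)
Fixpoint locc_tree_Mtotal N E P (H : locc_tree N E P) {struct H} :
  Meq (2 ^ N) (Mtotal P) (kron N E).
Proof.
  destruct H as [E i Hi | E j l Hj Hl Hsum]; intros a b Ha Hb.
  - unfold Mtotal, Madd, Mzero.
    destruct i as [|[|[|i]]]; simpl; try lia; ring.
  - assert (Hsub : forall F Q, In (F, Q) l -> Meq (2 ^ N) (Mtotal Q) (kron N (upd E j F)))
      by (intros F Q Hin; destruct (Hl F Q Hin) as [_ HT]; exact (locc_tree_Mtotal N _ Q HT)).
    rewrite (Mtotal_Psum_kron N E j l Hj Hsub a b Ha Hb).
    apply kron_Meq. intros k Hk x y Hx Hy. unfold upd.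
    destruct (Nat.eqb_spec k j) as [->|]; auto.
Qed.

Lemma Psum_qform_nonneg d l v i :
  (forall F Q, In (F, Q) l -> Cnonneg (qform d (Q i) v)) -> Cnonneg (qform d (Psum l i) v).
Proof.
  induction l as [|[F Q] l IH]; intros H; unfold Psum; simpl.
  - rewrite qform_Mzero. apply Cnonneg_C0.
  - rewrite qform_Madd. apply Cnonneg_add; [apply (H F); simpl; auto|].
    apply IH. intros F' Q' Hin. apply (H F'). simpl; auto.
Qed.

Fixpoint locc_tree_qform_vpow_nonneg N E P phi (H : locc_tree N E P) {struct H} :
  (forall k, Cnonneg (qform 2 (E k) phi)) -> forall i, Cnonneg (qform (2 ^ N) (P i) (vpow N phi)).
Proof.
  destruct H as [E i _ | E j l _ Hl _]; intros HE i'.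
  - destruct (Nat.eqb i' i).
    + rewrite qform_kron_vpow. apply Cnonneg_Cprod; auto.
    + rewrite qform_Mzero. apply Cnonneg_C0.
  - apply Psum_qform_nonneg. intros F Q Hin. destruct (Hl F Q Hin) as [HF HT].
    apply (locc_tree_qform_vpow_nonneg N _ Q phi HT).
    intros k. unfold upd. destruct (Nat.eqb k j); [apply HF | apply HE].
Qed.

Lemma sqrt3_sqr : sqrt3 * sqrt3 = 3.
Proof. unfold sqrt3. apply sqrt_sqrt. lra. Qed.

(* The real trine vectors: [U^i |0>] is [trine i] up to the phase [zeta N ^ i]. *)
Definition trine (i x : nat) : R :=
  match i, x with
  | O, O => 1 | O, _ => 0
  | 1%nat, O => 1/2 | 1%nat, _ => sqrt3 / 2
  | _, O => - (1/2) | _, _ => sqrt3 / 2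
  end.

Definition zeta (N : nat) : C := Copp (Cexpi (2 * PI / INR N)).

Definition zeta_pow (N i : nat) : C :=
  match i with O => C1 | 1%nat => zeta N | _ => Cmul (zeta N) (zeta N) end.

Definition Cnorm2 (z : C) : R := fst z ^ 2 + snd z ^ 2.

Lemma Cnorm2_mul z w : Cnorm2 (Cmul z w) = Cnorm2 z * Cnorm2 w.
Proof. destruct z, w; unfold Cnorm2, Cmul; simpl; ring. Qed.

Lemma Cnorm2_zeta_pow N i : (i < 3)%nat -> Cnorm2 (zeta_pow N i) = 1.
Proof.
  assert (Hz : Cnorm2 (zeta N) = 1).
  { unfold Cnorm2, zeta, Copp, Cexpi; simpl.
    pose proof (sin2_cos2 (2 * PI / INR N)) as H. unfold Rsqr in H. nra. }
  intros Hi. destruct i as [|[|[|i]]]; try lia; unfold zeta_pow.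
  - unfold Cnorm2, C1; simpl; ring.
  - exact Hz.
  - rewrite Cnorm2_mul, Hz. ring.
Qed.

Lemma Upow_ket0_trine N i x : (i < 3)%nat -> (x < 2)%nat ->
  Upow_ket0 N i x = Cmul (zeta_pow N i) (RtoC (trine i x)).
Proof.
  intros Hi Hx. pose proof sqrt3_sqr as H3.
  unfold zeta_pow. destruct i as [|[|[|i]]]; try lia; cbn [Upow_ket0];
  change (Umat N) with (Mscale (zeta N) Urot);
  generalize (zeta N); intros [p q];
  destruct x as [|[|x]]; try lia;
  simpl; unfold ket0, Mapply, Mscale, Urot, trine; simpl;
  unfold Cmul, Cadd, C0, C1, RtoC, Copp in *; simpl in *; apply Cpair_eq.
  all: try ring.
  all: assert (p ^ 2 * (sqrt3 * sqrt3) = p ^ 2 * 3) by (rewrite H3; auto);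
       assert (q ^ 2 * (sqrt3 * sqrt3) = q ^ 2 * 3) by (rewrite H3; auto);
       assert (p * q * (sqrt3 * sqrt3) = p * q * 3) by (rewrite H3; auto); lra.
Qed.

Lemma qform2_phase_real M (f : nat -> nat -> R) phi z (r : nat -> R) :
  (forall x y, (x < 2)%nat -> (y < 2)%nat -> M x y = RtoC (f x y)) ->
  phi 0%nat = Cmul z (RtoC (r 0%nat)) -> phi 1%nat = Cmul z (RtoC (r 1%nat)) ->
  qform 2 M phi = RtoC (Cnorm2 z *
     (r 0%nat * f 0%nat 0%nat * r 0%nat + r 0%nat * f 0%nat 1%nat * r 1%nat
      + r 1%nat * f 1%nat 0%nat * r 0%nat + r 1%nat * f 1%nat 1%nat * r 1%nat)).
Proof.
  intros HM H0 H1. unfold qform; simpl.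
  rewrite !HM, H0, H1 by lia. destruct z.
  unfold Cnorm2, RtoC, Cconj, Cmul, Cadd, C0; simpl. apply Cpair_eq; ring.
Qed.

Lemma qform_Mid_Upow_ket0 N i : (i < 3)%nat -> qform 2 Mid (Upow_ket0 N i) = C1.
Proof.
  intros Hi.
  rewrite (qform2_phase_real _ (fun x y => if Nat.eqb x y then 1 else 0) _
             (zeta_pow N i) (trine i)).
  - rewrite Cnorm2_zeta_pow by auto. unfold C1, RtoC. f_equal. pose proof sqrt3_sqr.
    destruct i as [|[|[|i]]]; try lia; unfold trine; simpl; lra.
  - intros x y _ _. unfold Mid, RtoC, C1, C0. destruct (Nat.eqb x y); auto.
  - apply Upow_ket0_trine; auto.
  - apply Upow_ket0_trine; auto.
Qed.

Lemma qform_Mid_psi N i : (i < 3)%nat -> qform (2 ^ N) Mid (psi N i) = C1.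
Proof.
  intros Hi. unfold psi. rewrite <- (qform_Meq _ _ _ _ (kron_Mid N)).
  rewrite qform_kron_vpow. apply Cprod_C1. intros; apply qform_Mid_Upow_ket0; auto.
Qed.

Lemma success_le_1 N P : Meq (2 ^ N) (Mtotal P) Mid ->
  (forall i j, (i < 3)%nat -> (j < 3)%nat -> Cnonneg (qform (2 ^ N) (P i) (psi N j))) ->
  success N P <= 1.
Proof.
  intros Htot Hnn.
  assert (B : forall j, (j < 3)%nat -> Re (qform (2 ^ N) (P j) (psi N j)) <= 1).
  { intros j Hj.
    assert (Hsum : Cadd (qform (2 ^ N) (P 0%nat) (psi N j))
       (Cadd (qform (2 ^ N) (P 1%nat) (psi N j)) (qform (2 ^ N) (P 2%nat) (psi N j))) = C1).
    { rewrite <- !qform_Madd, (qform_Meq _ _ _ _ Htot). apply qform_Mid_psi; auto. }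
    destruct (Cnonneg_sum3_le_1 _ _ _ (Hnn 0%nat j ltac:(lia) Hj) (Hnn 1%nat j ltac:(lia) Hj)
                (Hnn 2%nat j ltac:(lia) Hj) Hsum) as [B0 [B1 B2]].
    destruct j as [|[|[|j]]]; auto; lia. }
  unfold success. pose proof (B 0%nat ltac:(lia)). pose proof (B 1%nat ltac:(lia)).
  pose proof (B 2%nat ltac:(lia)). lra.
Qed.

Lemma povm3_success_le_1 N P : povm3 N P -> success N P <= 1.
Proof. intros [Hpsd Htot]. apply success_le_1; auto. intros i j Hi _. apply Hpsd, Hi. Qed.

Lemma locc3_success_le_1 N P : locc3 N P -> success N P <= 1.
Proof.
  intros HP. apply success_le_1.
  - intros a b Ha Hb. rewrite (locc_tree_Mtotal _ _ _ HP a b Ha Hb). apply kron_Mid; auto.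
  - intros i j _ Hj. apply (locc_tree_qform_vpow_nonneg N _ P _ HP).
    intros k. rewrite qform_Mid_Upow_ket0 by auto. unfold Cnonneg, C1, Re, Im; simpl; lra.
Qed.

(* [antitrine m] is orthogonal to [trine m], so outcome [m] rules out state [m]. *)
Definition antitrine (m x : nat) : R :=
  match m, x with
  | O, O => 0 | O, _ => 1
  | 1%nat, O => sqrt3 / 2 | 1%nat, _ => - (1/2)
  | _, O => sqrt3 / 2 | _, _ => 1/2
  end.

Definition antitrine_effect (m : nat) : Mat :=
  fun x y => RtoC (2/3 * (antitrine m x * antitrine m y)).

Lemma real_rank1_antitrine_effect m : real_rank1 (antitrine_effect m).
Proof.
  exists (fun x => sqrt (2/3) * antitrine m x). intros x y. unfold antitrine_effect. f_equal.
  transitivity (sqrt (2/3) * sqrt (2/3) * (antitrine m x * antitrine m y));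
    [rewrite sqrt_sqrt by lra |]; ring.
Qed.

Lemma antitrine_effect_sum x y : (x < 2)%nat -> (y < 2)%nat ->
  Cadd (antitrine_effect 0 x y) (Cadd (antitrine_effect 1 x y)
    (Cadd (antitrine_effect 2 x y) C0)) = Mid x y.
Proof.
  intros Hx Hy. pose proof sqrt3_sqr.
  unfold antitrine_effect, antitrine, Mid, RtoC, Cadd, C0, C1.
  destruct x as [|[|x]], y as [|[|y]]; try lia; simpl; apply Cpair_eq; lra.
Qed.

Definition outcome_prob (i m : nat) : R := if Nat.eqb m i then 0 else 1/2.

Lemma qform_antitrine_effect N i m : (i < 3)%nat -> (m < 3)%nat ->
  qform 2 (antitrine_effect m) (Upow_ket0 N i) = RtoC (outcome_prob i m).
Proof.
  intros Hi Hm.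
  rewrite (qform2_phase_real _ (fun x y => 2/3 * (antitrine m x * antitrine m y)) _
             (zeta_pow N i) (trine i)).
  - rewrite Cnorm2_zeta_pow by auto. f_equal. pose proof sqrt3_sqr.
    destruct i as [|[|[|i]]], m as [|[|[|m]]]; try lia;
      unfold outcome_prob, antitrine, trine; simpl; lra.
  - reflexivity.
  - apply Upow_ket0_trine; auto.
  - apply Upow_ket0_trine; auto.
Qed.

(* The protocol remembers which of the three states have been ruled out. *)
Definition excluded := (bool * bool * bool)%type.

Definition exclude (s : excluded) (m : nat) : excluded :=
  let '(b0, b1, b2) := s in
  match m with O => (true, b1, b2) | 1%nat => (b0, true, b2) | _ => (b0, b1, true) end.

Definition first_unexcluded (s : excluded) : nat :=
  let '(b0, b1, b2) := s in if negb b0 then 0%nat else if negb b1 then 1%nat else 2%nat.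

Lemma first_unexcluded_lt_3 s : (first_unexcluded s < 3)%nat.
Proof. destruct s as [[[] []] []]; simpl; lia. Qed.

(* Parties [N - n], ..., [N - 1] measure in turn; at the leaves the protocol
   announces the first state not yet ruled out. *)
Fixpoint elim_protocol (N n : nat) (E : nat -> Mat) (s : excluded) : nat -> Mat :=
  match n with
  | O => fun i => if Nat.eqb i (first_unexcluded s) then kron N E else Mzero
  | S n' => Psum (map (fun m => (antitrine_effect m,
                 elim_protocol N n' (upd E (N - S n') (antitrine_effect m)) (exclude s m)))
               (0 :: 1 :: 2 :: nil)%nat)
  end.

Lemma upd_Mid_above N n E m : (S n <= N)%nat ->
  (forall k, (N - S n <= k)%nat -> E k = Mid) ->
  forall k, (N - n <= k)%nat -> upd E (N - S n) (antitrine_effect m) k = Mid.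
Proof.
  intros Hn HE k Hk. unfold upd. destruct (Nat.eqb_spec k (N - S n)); [lia|]. apply HE; lia.
Qed.

Lemma elim_protocol_locc N n E s : (n <= N)%nat ->
  (forall k, (N - n <= k)%nat -> E k = Mid) -> locc_tree N E (elim_protocol N n E s).
Proof.
  revert E s; induction n; intros E s Hn HE.
  - apply locc_leaf, first_unexcluded_lt_3.
  - apply (locc_split N E (N - S n)); [lia| |].
    + intros F Q Hin. simpl in Hin.
      destruct Hin as [Heq|[Heq|[Heq|[]]]]; inversion Heq; subst;
        (split; [apply psd_real_rank1, real_rank1_antitrine_effect|]);
        apply IHn; auto using upd_Mid_above; lia.
    + intros x y Hx Hy. simpl. rewrite HE by lia. apply antitrine_effect_sum; auto.
Qed.

Lemma elim_protocol_psd N n E s i :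
  (forall k, (k < N - n)%nat -> real_rank1 (E k)) -> psd (2 ^ N) (elim_protocol N n E s i).
Proof.
  revert E s; induction n; intros E s HE; simpl.
  - destruct (Nat.eqb i (first_unexcluded s)); [|apply psd_Mzero].
    apply psd_real_rank1, real_rank1_kron. intros k Hk; apply HE; lia.
  - unfold Psum; simpl.
    assert (Hm : forall m, psd (2 ^ N)
               (elim_protocol N n (upd E (N - S n) (antitrine_effect m)) (exclude s m) i)).
    { intros m. apply IHn. intros k Hk. unfold upd.
      destruct (Nat.eqb_spec k (N - S n)); [apply real_rank1_antitrine_effect|].
      apply HE; lia. }
    repeat apply psd_Madd; auto using psd_Mzero.
Qed.

(* Probability that the protocol with [n] measurements left, in knowledge state
   [s], announces [i] when the state is [psi N i]. *)
Fixpoint elim_success (i n : nat) (s : excluded) : R :=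
  match n with
  | O => if Nat.eqb i (first_unexcluded s) then 1 else 0
  | S n' => outcome_prob i 0 * elim_success i n' (exclude s 0)
          + outcome_prob i 1 * elim_success i n' (exclude s 1)
          + outcome_prob i 2 * elim_success i n' (exclude s 2)
  end.

Lemma elim_protocol_qform N n E s i : (i < 3)%nat -> (n <= N)%nat ->
  (forall k, (N - n <= k)%nat -> E k = Mid) ->
  qform (2 ^ N) (elim_protocol N n E s i) (psi N i)
  = Cmul (Cprod (fun k => qform 2 (E k) (Upow_ket0 N i)) N) (RtoC (elim_success i n s)).
Proof.
  intros Hi. unfold psi. revert E s; induction n; intros E s Hn HE; simpl.
  - destruct (Nat.eqb i (first_unexcluded s)).
    + rewrite qform_kron_vpow. unfold RtoC, Cmul. destruct (Cprod _ _); simpl.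
      apply Cpair_eq; ring.
    + rewrite qform_Mzero. unfold RtoC, Cmul, C0. destruct (Cprod _ _); simpl.
      apply Cpair_eq; ring.
  - unfold Psum; simpl.
    rewrite !qform_Madd, qform_Mzero, !IHn by (auto using upd_Mid_above; lia).
    set (j := (N - S n)%nat). assert (Hj : (j < N)%nat) by (unfold j; lia).
    rewrite !(Cprod_upd (fun _ M => qform 2 M (Upow_ket0 N i))) by auto.
    rewrite (Cprod_extract (fun k => qform 2 (E k) (Upow_ket0 N i)) N j Hj), HE,
      qform_Mid_Upow_ket0 by (auto; unfold j; lia).
    rewrite !qform_antitrine_effect, !RtoC_add, !RtoC_mul by (auto; lia).
    ring.
Qed.

Lemma elim_success_0 n b1 b2 : elim_success 0 n (false, b1, b2) = 1.
Proof.
  revert b1 b2; induction n; intros; simpl; auto.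
  rewrite !IHn. unfold outcome_prob; simpl. lra.
Qed.

Lemma elim_success_1_after_0 n b2 : elim_success 1 n (true, false, b2) = 1.
Proof.
  revert b2; induction n; intros; simpl; auto.
  rewrite !IHn. unfold outcome_prob; simpl. lra.
Qed.

Lemma elim_success_1 n b2 : 1 - (1/2) ^ n <= elim_success 1 n (false, false, b2).
Proof.
  revert b2; induction n; intros; simpl; [lra|].
  rewrite elim_success_1_after_0. specialize (IHn true). unfold outcome_prob; simpl. lra.
Qed.

Lemma elim_success_2_after_01 n : elim_success 2 n (true, true, false) = 1.
Proof. induction n; simpl; auto. rewrite !IHn. unfold outcome_prob; simpl. lra. Qed.

Lemma elim_success_2_after_0 n : 1 - (1/2) ^ n <= elim_success 2 n (true, false, false).
Proof.
  induction n; simpl; [lra|].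
  rewrite elim_success_2_after_01. unfold outcome_prob; simpl. lra.
Qed.

Lemma elim_success_2_after_1 n : 1 - (1/2) ^ n <= elim_success 2 n (false, true, false).
Proof.
  induction n; simpl; [lra|].
  rewrite elim_success_2_after_01. unfold outcome_prob; simpl. lra.
Qed.

Lemma elim_success_2 n : 1 - 2 * (1/2) ^ n <= elim_success 2 n (false, false, false).
Proof.
  destruct n; simpl; [lra|].
  pose proof (elim_success_2_after_0 n); pose proof (elim_success_2_after_1 n).
  unfold outcome_prob; simpl. lra.
Qed.

Definition elim_measurement (N : nat) : nat -> Mat :=
  elim_protocol N N (fun _ => Mid) (false, false, false).

Lemma elim_measurement_locc3 N : locc3 N (elim_measurement N).
Proof. apply elim_protocol_locc; auto. Qed.

Lemma elim_measurement_povm3 N : povm3 N (elim_measurement N).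
Proof.
  split.
  - intros i _. apply elim_protocol_psd. intros; lia.
  - intros a b Ha Hb. change (Mtotal (elim_measurement N) a b = Mid a b).
    rewrite (locc_tree_Mtotal _ _ _ (elim_measurement_locc3 N) a b Ha Hb).
    apply kron_Mid; auto.
Qed.

Lemma elim_measurement_success N : 1 - (1/2) ^ N <= success N (elim_measurement N).
Proof.
  assert (H : forall i, (i < 3)%nat ->
    Re (qform (2 ^ N) (elim_measurement N i) (psi N i)) = elim_success i N (false, false, false)).
  { intros i Hi. unfold elim_measurement. rewrite elim_protocol_qform by auto.
    rewrite Cprod_C1 by (intros; apply qform_Mid_Upow_ket0; auto).
    unfold RtoC, Cmul, C1, Re; simpl; ring. }
  unfold success. rewrite !H, elim_success_0 by lia.
  pose proof (elim_success_1 N false). pose proof (elim_success_2 N). lra.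
Qed.

Lemma Un_cv_squeeze_1 (u : nat -> R) :
  (forall N, (1 <= N)%nat -> 1 - (1/2) ^ N <= u N <= 1) -> Un_cv u 1.
Proof.
  intros Hu eps Heps.
  destruct (pow_lt_1_zero (1/2) ltac:(rewrite Rabs_pos_eq; lra) eps Heps) as [M HM].
  exists (max M 1). intros n Hn. unfold R_dist.
  specialize (HM n ltac:(lia)). specialize (Hu n ltac:(lia)).
  rewrite Rabs_pos_eq in HM by (apply pow_le; lra).
  apply Rabs_def1; lra.
Qed.

Lemma Un_cv_1_of_is_lub (S : nat -> R -> Prop) (p : nat -> R) :
  (forall N, (1 <= N)%nat -> is_lub (S N) (p N)) ->
  (forall N x, S N x -> x <= 1) ->
  (forall N, exists x, S N x /\ 1 - (1/2) ^ N <= x) ->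
  Un_cv p 1.
Proof.
  intros Hlub Hle1 Hwitness. apply Un_cv_squeeze_1. intros N HN.
  destruct (Hlub N HN) as [Hub Hleast], (Hwitness N) as [x [Hx Hbound]]. split.
  - apply Rle_trans with x; auto.
  - apply Hleast. intros y Hy. apply (Hle1 N y Hy).
Qed.

Theorem mainTheorem14 (Popt Plocc : nat -> R) :
  (forall N : nat, (1 <= N)%nat -> is_lub (opt_values N) (Popt N)) ->
  (forall N : nat, (1 <= N)%nat -> is_lub (locc_values N) (Plocc N)) ->
  Un_cv Plocc 1 /\ Un_cv Popt 1 /\ Un_cv (fun N => Popt N - Plocc N) 0.
Proof.
  intros Hopt Hlocc.
  assert (Hcv_opt : Un_cv Popt 1).
  { apply (Un_cv_1_of_is_lub opt_values); auto.
    - intros N x [P [HP ->]]. apply povm3_success_le_1; auto.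
    - intros N. exists (success N (elim_measurement N)).
      split; [exists (elim_measurement N); auto using elim_measurement_povm3|].
      apply elim_measurement_success. }
  assert (Hcv_locc : Un_cv Plocc 1).
  { apply (Un_cv_1_of_is_lub locc_values); auto.
    - intros N x [P [HP ->]]. apply locc3_success_le_1; auto.
    - intros N. exists (success N (elim_measurement N)).
      split; [exists (elim_measurement N); auto using elim_measurement_locc3|].
      apply elim_measurement_success. }
  split; [|split]; auto.
  replace 0 with (1 - 1) by ring. apply CV_minus; auto.
Qed.
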